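(* Let $f=\frac1n\sum_{i=1}^n f_i$ where each $f_i:\mathbb{R}^d\to\mathbb{R}$ is $L$-smooth, and assume moreover that either each $f_i$ is $\mu$-strongly convex for some $\mu>0$, or $\inf_x f(x)>-\infty$. Let the stepsize satisfy $\gamma\le\frac1{3L}$. Then the iterates of No Full Grad SARAH (described in the context) satisfy, for every epoch $s\ge1$, $$\Big\|\nabla f(x_s^0)-\frac1{n+1}\sum_{t=0}^{n}v_s^t\Big\|^2\le 9\gamma^2L^2\|v_s\|^2+36\gamma^2L^2n^2\|v_{s-1}\|^2.$$
   Context: No Full Grad SARAH: input $x_0^0\in\mathbb{R}^d$, $v_0=0$, stepsize $\gamma>0$. For epochs $s=0,1,\dots$: choose a permutation $\pi_s^1,\dots,\pi_s^n$ of $\{1,\dots,n\}$ (by any shuffling rule); set $\tilde v_s^1=0$, $v_s^0=v_s$, $x_s^1=x_s^0-\gamma v_s^0$; for $t=1,\dots,n$ set $\tilde v_s^{t+1}=\frac{t-1}{t}\tilde v_s^t+\frac1t\nabla f_{\pi_s^t}(x_s^t)$, $v_s^t=\frac1n\big(\nabla f_{\pi_s^t}(x_s^t)-\nabla f_{\pi_s^t}(x_s^{t-1})\big)+v_s^{t-1}$, $x_s^{t+1}=x_s^t-\gamma v_s^t$; then $x_{s+1}^0=x_s^{n+1}$, $v_{s+1}=\tilde v_s^{n+1}$. *)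

From HB Require Import structures.
From mathcomp Require Import all_boot all_order all_algebra all_fingroup.
From mathcomp Require Import all_classical all_reals all_analysis.
Set Implicit Arguments. Unset Strict Implicit. Unset Printing Implicit Defensive.
Import Order.TTheory GRing.Theory Num.Theory.
Import numFieldNormedType.Exports.
Local Open Scope ring_scope.

Section NFGS.
Variables (R : realType) (d : nat).
Notation V := 'rV[R]_d.

Definition dotv (u v : V) : R := \sum_(i < d) u 0 i * v 0 i.
Definition enorm (u : V) : R := Num.sqrt (dotv u u).

Definition has_gradient (f : V -> R) (g : V -> V) : Prop :=
  forall x, differentiable f x /\ forall h, is_derive x h f (dotv (g x) h).

Definition L_smooth (L : R) (f : V -> R) (g : V -> V) : Prop :=
  has_gradient f g /\ forall x y, enorm (g x - g y) <= L * enorm (x - y).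

Definition strongly_convex (mu : R) (f : V -> R) : Prop :=
  forall (x y : V) (th : R), 0 <= th <= 1 ->
    f (th *: x + (1 - th) *: y)
      <= th * f x + (1 - th) * f y - mu / 2 * th * (1 - th) * enorm (x - y) ^+ 2.

Definition favg (n : nat) (f : 'I_n -> V -> R) (x : V) : R :=
  n%:R^-1 * \sum_(i < n) f i x.
Definition gavg (n : nat) (g : 'I_n -> V -> V) (x : V) : V :=
  n%:R^-1 *: \sum_(i < n) g i x.

(* inner state after processing step t (0 <= t <= n):
   xprev = x_s^t, xcur = x_s^{t+1}, vcur = v_s^t, vtil = tilde v_s^{t+1}, cnt = t *)
Record nfg_state := NFGState { xprev : V; xcur : V; vcur : V; vtil : V; cnt : nat }.

Definition nfg_init (gamma : R) (x0 v : V) : nfg_state :=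
  NFGState x0 (x0 - gamma *: v) v 0 0.

(* process step t = cnt+1 with sampled index j = pi_s^t *)
Definition nfg_step (n : nat) (g : 'I_n -> V -> V) (gamma : R)
    (st : nfg_state) (j : 'I_n) : nfg_state :=
  let t := (cnt st).+1 in
  let v' := n%:R^-1 *: (g j (xcur st) - g j (xprev st)) + vcur st in
  NFGState (xcur st) (xcur st - gamma *: v') v'
    ((t%:R - 1) / t%:R *: vtil st + t%:R^-1 *: g j (xcur st)) t.

Definition nfg_epoch (n : nat) (g : 'I_n -> V -> V) (gamma : R)
    (p : 'S_n) (x0 v : V) : seq nfg_state :=
  let st0 := nfg_init gamma x0 v in
  st0 :: scanl (nfg_step g gamma) st0 [seq p i | i <- enum 'I_n].

(* (x_s^0, v_s) for every epoch s; x_0^0 given, v_0 = 0 *)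
Fixpoint nfg_outer (n : nat) (g : 'I_n -> V -> V) (gamma : R)
    (pi : nat -> 'S_n) (x00 : V) (s : nat) : V * V :=
  match s with
  | 0 => (x00, 0)
  | s'.+1 =>
      let: (x0, v) := nfg_outer g gamma pi x00 s' in
      let st := last (nfg_init gamma x0 v) (nfg_epoch g gamma (pi s') x0 v) in
      (xcur st, vtil st)
  end.

Definition nfg_x (n : nat) (g : 'I_n -> V -> V) gamma pi x00 s : V :=
  (nfg_outer g gamma pi x00 s).1.
Definition nfg_v (n : nat) (g : 'I_n -> V -> V) gamma pi x00 s : V :=
  (nfg_outer g gamma pi x00 s).2.
Definition nfg_vt (n : nat) (g : 'I_n -> V -> V) gamma pi x00 s (t : nat) : V :=
  vcur (nth (nfg_init gamma 0 0)
    (nfg_epoch g gamma (pi s) (nfg_x g gamma pi x00 s) (nfg_v g gamma pi x00 s)) t).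

End NFGS.

From HB Require Import structures.
From mathcomp Require Import all_boot all_order all_algebra all_fingroup.
From mathcomp Require Import all_classical all_reals all_analysis.
From mathcomp Require Import ring lra.
Import Order.TTheory GRing.Theory Num.Theory.
Local Open Scope ring_scope.

(* Within an epoch, v^{t+1} - v^t = (grad f_i (x^{t+1}) - grad f_i (x^t)) / n has norm at
   most (gamma L / n) |v^t|.  As 3 gamma L <= 1, this keeps |v^t| <= 2 |v^0| and
   |v^t - v^0| <= 2 gamma L |v^0| for t <= n, so the mean of the v_s^t is within
   2 gamma L |v_s| of v_s.  Moreover v_s is the mean of the gradients grad f_{pi^t} taken
   along the previous epoch, at points within 2 gamma n |v_{s-1}| of x_s^0 = x_{s-1}^{n+1};
   hence |grad f (x_s^0) - v_s| <= 2 gamma L n |v_{s-1}|.  Conclude with the triangle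
   inequality and (a + b)^2 <= 2 a^2 + 2 b^2. *)

Lemma sqr_le_sqrD {R : realFieldType} [e a b : R] :
  0 <= e -> e <= a + b -> e ^+ 2 <= 2 * (a ^+ 2 + b ^+ 2).
Proof.
move=> e_ge0 e_le; apply: le_trans (_ : (a + b) ^+ 2 <= _).
  by rewrite ler_sqr ?nnegrE // (le_trans e_ge0).
by have := sqr_ge0 (a - b); rewrite sqrrB sqrrD; lra.
Qed.

Section EuclideanNorm.
Context {R : realType} {d : nat}.
Implicit Types (u v w : 'rV[R]_d).

Lemma dotvC u v : dotv u v = dotv v u.
Proof. by apply: eq_bigr => i _; rewrite mulrC. Qed.

Lemma dotvDl u v w : dotv (u + v) w = dotv u w + dotv v w.
Proof. by rewrite /dotv -big_split; apply: eq_bigr => i _; rewrite !mxE mulrDl. Qed.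

Lemma dotvZl c u w : dotv (c *: u) w = c * dotv u w.
Proof. by rewrite /dotv mulr_sumr; apply: eq_bigr => i _; rewrite !mxE mulrA. Qed.

Lemma dotvDr u v w : dotv w (u + v) = dotv w u + dotv w v.
Proof. by rewrite dotvC dotvDl !(dotvC w). Qed.

Lemma dotvZr c u w : dotv w (c *: u) = c * dotv w u.
Proof. by rewrite dotvC dotvZl dotvC. Qed.

Lemma dotvv_ge0 u : 0 <= dotv u u.
Proof. by apply: sumr_ge0 => i _; rewrite -expr2 sqr_ge0. Qed.

Lemma dotvv_eq0 u : dotv u u = 0 -> u = 0.
Proof.
move=> /eqP; rewrite psumr_eq0 => [/allP u0|i _]; last by rewrite -expr2 sqr_ge0.
apply/rowP => i; rewrite mxE; apply/eqP.
by have := u0 i (mem_index_enum i); rewrite /= mulf_eq0 orbb.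
Qed.

Lemma CauchySchwarz_dotv u v : dotv u v <= enorm u * enorm v.
Proof.
have [uv_le0|uv_gt0] := lerP (dotv u v) 0.
  by apply: le_trans uv_le0 _; rewrite mulr_ge0 ?sqrtr_ge0.
rewrite -ler_sqr ?nnegrE ?(ltW uv_gt0) ?mulr_ge0 ?sqrtr_ge0 //.
rewrite exprMn !sqr_sqrtr ?dotvv_ge0 //.
have [vv_gt0|vv_le0] := ltrP 0 (dotv v v); last first.
  have v0 : v = 0 by apply: dotvv_eq0; apply/eqP; rewrite eq_le vv_le0 dotvv_ge0.
  by move: uv_gt0; rewrite v0 /dotv big1 ?ltxx // => i _; rewrite mxE mulr0.
(* 0 <= <b u - c v, b u - c v> = b (a b - c^2), with a = <u, u>, b = <v, v>, c = <u, v> *)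
have := dotvv_ge0 (dotv v v *: u + (- dotv u v) *: v).
rewrite !(dotvDl, dotvDr, dotvZl, dotvZr) (dotvC v u).
set a := dotv u u; set b := dotv v v; set c := dotv u v => h.
have : 0 <= b * (a * b - c ^+ 2) by nra.
by rewrite pmulr_rge0 // subr_ge0.
Qed.

Lemma enorm_ge0 u : 0 <= enorm u.
Proof. exact: sqrtr_ge0. Qed.

Lemma enorm_sqr u : enorm u ^+ 2 = dotv u u.
Proof. by rewrite sqr_sqrtr // dotvv_ge0. Qed.

Lemma enormZ c u : enorm (c *: u) = `|c| * enorm u.
Proof. by rewrite /enorm dotvZl dotvZr mulrA -expr2 sqrtrM ?sqr_ge0 // sqrtr_sqr. Qed.

Lemma enormN u : enorm (- u) = enorm u.
Proof. by rewrite -scaleN1r enormZ normrN normr1 mul1r. Qed.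

Lemma enorm0 : enorm (0 : 'rV[R]_d) = 0.
Proof. by rewrite -(scale0r 0) enormZ normr0 mul0r. Qed.

Lemma enormD u v : enorm (u + v) <= enorm u + enorm v.
Proof.
rewrite -ler_sqr ?nnegrE ?addr_ge0 ?enorm_ge0 //.
rewrite enorm_sqr sqrrD !enorm_sqr !(dotvDl, dotvDr) (dotvC v u).
have := CauchySchwarz_dotv u v; lra.
Qed.

Lemma enorm_sum (I : Type) (r : seq I) (P : pred I) (F : I -> 'rV[R]_d) :
  enorm (\sum_(i <- r | P i) F i) <= \sum_(i <- r | P i) enorm (F i).
Proof.
apply: (big_ind2 (fun u a => enorm u <= a)) => [|u a v b ua vb|//]; first by rewrite enorm0.
by apply: le_trans (enormD u v) _; apply: lerD.
Qed.

Lemma enorm_mean_le m (F : 'I_m -> 'rV[R]_d) e :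
  (0 < m)%N -> (forall k, enorm (F k) <= e) -> enorm (m%:R^-1 *: \sum_k F k) <= e.
Proof.
move=> m_gt0 Fe; rewrite enormZ ger0_norm ?invr_ge0 // ler_pdivrMl ?ltr0n //.
apply: le_trans (enorm_sum _ _ _ _) _.
by apply: le_trans (ler_sum _ (fun k _ => Fe k)) _; rewrite sumr_const card_ord mulr_natl.
Qed.

Lemma enorm_telescope_le (y : nat -> 'rV[R]_d) e k m : (k <= m)%N ->
    (forall i, (k <= i < m)%N -> enorm (y i.+1 - y i) <= e) ->
  enorm (y m - y k) <= (m - k)%:R * e.
Proof.
move=> km ye; rewrite -telescope_sumr //; apply: le_trans (enorm_sum _ _ _ _) _.
by apply: le_trans (ler_sum_nat ye) _; rewrite sumr_const_nat mulr_natl.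
Qed.

(* The induction step uses |u t| <= 2 |u 0|, which the bound at t gives since 2 c t <= 1. *)
Lemma enorm_drift_le (u : nat -> 'rV[R]_d) c m : 0 <= c -> 2 * c * m%:R <= 1 ->
    (forall t, (t < m)%N -> enorm (u t.+1 - u t) <= c * enorm (u t)) ->
  forall t, (t <= m)%N -> enorm (u t - u 0) <= 2 * c * t%:R * enorm (u 0).
Proof.
move=> c_ge0 cm_le1 step; elim=> [|t IH] tm; first by rewrite subrr enorm0 mulr0 mul0r.
have t_le_m : (t <= m)%N := ltnW tm.
have ct_le1 : 2 * c * t%:R <= 1.
  by apply: le_trans cm_le1; rewrite ler_wpM2l ?mulr_ge0 ?ler_nat.
have ut_le : enorm (u t) <= 2 * enorm (u 0).
  have := enormD (u t - u 0) (u 0); rewrite subrK.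
  have := IH t_le_m; have := ler_wpM2r (enorm_ge0 (u 0)) ct_le1; lra.
have := enormD (u t.+1 - u t) (u t - u 0); rewrite addrA subrK.
have := step t tm; have := IH t_le_m; have := ler_wpM2l c_ge0 ut_le.
rewrite -natr1; lra.
Qed.

End EuclideanNorm.

Section Epoch.
Context {R : realType} {d n : nat}.
Variables (g : 'I_n -> 'rV[R]_d -> 'rV[R]_d) (gamma : R).

Lemma nfg_step_xprev st j :
  xprev (nfg_step g gamma st j)
  = xcur (nfg_step g gamma st j) + gamma *: vcur (nfg_step g gamma st j).
Proof. by rewrite /= subrK. Qed.

Lemma nfg_step_vtil st j :
  (cnt st).+1%:R *: vtil (nfg_step g gamma st j) = (cnt st)%:R *: vtil st + g j (xcur st).
Proof.
have t1_neq0 : (cnt st).+1%:R != 0 :> R by rewrite pnatr_eq0.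
by rewrite /= scalerDr !scalerA mulrC divfK // -natr1 addrK mulfV // scale1r.
Qed.

Variables (p : 'S_n) (x0 v : 'rV[R]_d).

Definition epoch_state t := nth (nfg_init gamma 0 0) (nfg_epoch g gamma p x0 v) t.

Lemma epoch_state_foldl t : (t <= n)%N ->
  epoch_state t
  = foldl (nfg_step g gamma) (nfg_init gamma x0 v) (take t [seq p i | i <- enum 'I_n]).
Proof. by move=> tn; rewrite /epoch_state nth_cons_scanl // size_map size_enum_ord. Qed.

Lemma epoch_stateS t (tn : (t < n)%N) :
  epoch_state t.+1 = nfg_step g gamma (epoch_state t) (p (Ordinal tn)).
Proof.
have t_lt_size : (t < size [seq p i | i <- enum 'I_n])%N by rewrite size_map size_enum_ord.
rewrite (epoch_state_foldl _ tn) (epoch_state_foldl _ (ltnW tn)).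
rewrite (take_nth (p (Ordinal tn)) t_lt_size).
by rewrite foldl_rcons (nth_map (Ordinal tn)) ?size_enum_ord // (nth_ord_enum _ (Ordinal tn)).
Qed.

Lemma last_epoch : last (nfg_init gamma x0 v) (nfg_epoch g gamma p x0 v) = epoch_state n.
Proof. by rewrite /= (last_nth (nfg_init gamma 0 0)) size_scanl size_map size_enum_ord. Qed.

Lemma epoch_cnt t : (t <= n)%N -> cnt (epoch_state t) = t.
Proof. by elim: t => [//|t IH] tn; rewrite (epoch_stateS _ tn) /= (IH (ltnW tn)). Qed.

Lemma epoch_xprev t : (t <= n)%N ->
  xprev (epoch_state t) = xcur (epoch_state t) + gamma *: vcur (epoch_state t).
Proof.
case: t => [|t] tn; first by rewrite /= subrK.
by rewrite (epoch_stateS _ tn) nfg_step_xprev.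
Qed.

Lemma epoch_vtil :
  n%:R *: vtil (epoch_state n) = \sum_(k < n) g (p k) (xcur (epoch_state k)).
Proof.
suff vtilE t : (t <= n)%N ->
    t%:R *: vtil (epoch_state t) = \sum_(k < n | (k < t)%N) g (p k) (xcur (epoch_state k)).
  by rewrite vtilE //; apply: eq_bigl => k; rewrite ltn_ord.
elim: t => [_|t IH tn]; first by rewrite scale0r big_pred0.
have := nfg_step_vtil (epoch_state t) (p (Ordinal tn)).
have t_le_n : (t <= n)%N := ltnW tn.
rewrite -(epoch_stateS _ tn) (epoch_cnt _ t_le_n) (IH t_le_n) => ->.
rewrite [RHS](bigD1 (Ordinal tn)) //= [RHS]addrC; congr (_ + _); apply: eq_bigl => k.
by rewrite ltnS [(k < t)%N]ltn_neqAle andbC.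
Qed.

Variable L : R.
Hypothesis g_lip : forall i x y, enorm (g i x - g i y) <= L * enorm (x - y).
Hypothesis gamma_ge0 : 0 <= gamma.

Lemma nfg_step_vcur_dist st j : xprev st = xcur st + gamma *: vcur st ->
  enorm (vcur (nfg_step g gamma st j) - vcur st) <= gamma * L / n%:R * enorm (vcur st).
Proof.
move=> xprevE; rewrite /= addrK xprevE enormZ ger0_norm ?invr_ge0 //.
have -> : gamma * L / n%:R * enorm (vcur st) = n%:R^-1 * (L * (gamma * enorm (vcur st))).
  by ring.
rewrite ler_wpM2l ?invr_ge0 //; apply: le_trans (g_lip _ _ _) _.
by rewrite opprD addNKr enormN enormZ ger0_norm.
Qed.

Lemma nfg_step_xcur_distE st j :
  enorm (xcur (nfg_step g gamma st j) - xcur st) = gamma * enorm (vcur (nfg_step g gamma st j)).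
Proof.
set st' := nfg_step g gamma st j.
have -> : xcur st' = xcur st - gamma *: vcur st' by [].
by rewrite addrAC subrr add0r enormN enormZ ger0_norm.
Qed.

Hypothesis L_ge0 : 0 <= L.
Hypothesis gammaL_le : 3 * gamma * L <= 1.
Hypothesis n_gt0 : (0 < n)%N.

Let gammaL_ge0 : 0 <= gamma * L. Proof. exact: mulr_ge0. Qed.
Let gammaL_le1 : 2 * (gamma * L) <= 1.
Proof. by apply: le_trans gammaL_le; rewrite -mulrA ler_wpM2r // ler_nat. Qed.
Let n_neq0 : n%:R != 0 :> R. Proof. by rewrite pnatr_eq0 -lt0n. Qed.

Lemma epoch_vcur_drift t : (t <= n)%N ->
  enorm (vcur (epoch_state t) - v) <= 2 * (gamma * L / n%:R) * t%:R * enorm v.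
Proof.
apply: (enorm_drift_le (fun t => vcur (epoch_state t))).
- by rewrite divr_ge0.
- by rewrite -mulrA divfK.
move=> s sn; rewrite (epoch_stateS _ sn).
exact/nfg_step_vcur_dist/epoch_xprev/ltnW.
Qed.

Lemma epoch_vcur_dist t : (t <= n)%N ->
  enorm (vcur (epoch_state t) - v) <= 2 * (gamma * L) * enorm v.
Proof.
move=> tn; apply: le_trans (epoch_vcur_drift _ tn) _; rewrite ler_wpM2r ?enorm_ge0 //.
by rewrite -mulrA ler_wpM2l // mulrAC ler_pdivrMr ?ltr0n // ler_wpM2l ?ler_nat.
Qed.

Lemma epoch_vcur_le t : (t <= n)%N -> enorm (vcur (epoch_state t)) <= 2 * enorm v.
Proof.
move=> tn; have := enormD (vcur (epoch_state t) - v) v; rewrite subrK.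
have := epoch_vcur_dist _ tn; have := ler_wpM2r (enorm_ge0 v) gammaL_le1; lra.
Qed.

Lemma epoch_mean_dist :
  enorm ((n.+1)%:R^-1 *: \sum_(t < n.+1) vcur (epoch_state t) - v)
  <= 2 * (gamma * L) * enorm v.
Proof.
have -> : (n.+1)%:R^-1 *: \sum_(t < n.+1) vcur (epoch_state t) - v
          = (n.+1)%:R^-1 *: \sum_(t < n.+1) (vcur (epoch_state t) - v).
  rewrite sumrB sumr_const card_ord scalerBr -[v *+ _]scaler_nat scalerA.
  by rewrite mulVf ?pnatr_eq0 ?scale1r.
by apply: enorm_mean_le => // t; apply: epoch_vcur_dist; rewrite -ltnS.
Qed.

Lemma epoch_xcur_dist k : (k <= n)%N ->
  enorm (xcur (epoch_state n) - xcur (epoch_state k)) <= 2 * gamma * n%:R * enorm v.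
Proof.
move=> kn; apply: le_trans
  (enorm_telescope_le (fun t => xcur (epoch_state t)) (gamma * (2 * enorm v)) _ _ kn _) _.
  move=> i /andP[_ i_lt_n]; rewrite (epoch_stateS _ i_lt_n) nfg_step_xcur_distE.
  by rewrite -(epoch_stateS _ i_lt_n) ler_wpM2l // epoch_vcur_le.
have nk_le : (n - k)%:R <= n%:R :> R by rewrite ler_nat leq_subr.
have := ler_wpM2r (mulr_ge0 gamma_ge0 (mulr_ge0 (ler0n R 2) (enorm_ge0 v))) nk_le; lra.
Qed.

Lemma epoch_vtil_dist :
  enorm (gavg g (xcur (epoch_state n)) - vtil (epoch_state n))
  <= 2 * (gamma * L) * n%:R * enorm v.
Proof.
have -> : vtil (epoch_state n) = n%:R^-1 *: \sum_k g (p k) (xcur (epoch_state k)).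
  by rewrite -epoch_vtil scalerA mulVf ?scale1r.
rewrite /gavg (reindex_inj (@perm_inj _ p)) -scalerBr -sumrB.
apply: enorm_mean_le => // k; apply: le_trans (g_lip _ _ _) _.
have := ler_wpM2l L_ge0 (epoch_xcur_dist _ (ltnW (ltn_ord k))); lra.
Qed.

End Epoch.

Lemma nfg_outerS (R : realType) (d n : nat) (g : 'I_n -> 'rV[R]_d -> 'rV[R]_d)
    gamma pi x00 s :
  let st :=
    epoch_state g gamma (pi s) (nfg_x g gamma pi x00 s) (nfg_v g gamma pi x00 s) n in
  nfg_outer g gamma pi x00 s.+1 = (xcur st, vtil st).
Proof.
rewrite /nfg_x /nfg_v [nfg_outer _ _ _ _ s.+1]/=; case: (nfg_outer _ _ _ _ s) => x v.
exact: (congr1 (fun st => (xcur st, vtil st)) (last_epoch g gamma (pi s) x v)).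
Qed.

Theorem lemma4 (R : realType) (d n : nat) (f : 'I_n -> 'rV[R]_d -> R)
    (g : 'I_n -> 'rV[R]_d -> 'rV[R]_d) (L gamma : R)
    (pi : nat -> 'S_n) (x00 : 'rV[R]_d) :
  (0 < n)%N -> 0 <= L ->
  (forall i, L_smooth L (f i) (g i)) ->
  ((exists mu : R, 0 < mu /\ forall i, strongly_convex mu (f i)) \/
   (exists m : R, forall x, m <= favg f x)) ->
  0 < gamma -> 3 * gamma * L <= 1 ->
  forall s : nat, (1 <= s)%N ->
    enorm (gavg g (nfg_x g gamma pi x00 s)
           - (n.+1)%:R^-1 *: \sum_(t < n.+1) nfg_vt g gamma pi x00 s t) ^+ 2
    <= 9 * gamma ^+ 2 * L ^+ 2 * enorm (nfg_v g gamma pi x00 s) ^+ 2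
       + 36 * gamma ^+ 2 * L ^+ 2 * (n%:R) ^+ 2 * enorm (nfg_v g gamma pi x00 s.-1) ^+ 2.
Proof.
move=> n_gt0 L_ge0 smooth _ gamma_gt0 gammaL_le [//|s] _ /=.
have g_lip i x y : enorm (g i x - g i y) <= L * enorm (x - y).
  by case: (smooth i) => _; apply.
have gamma_ge0 := ltW gamma_gt0.
set x := nfg_x g gamma pi x00 s.+1; set v := nfg_v g gamma pi x00 s.+1.
set v' := nfg_v g gamma pi x00 s.
set M := _ *: \sum_(t < n.+1) _.
have mean_dist : enorm (M - v) <= 2 * (gamma * L) * enorm v.
  exact: (epoch_mean_dist _ _ (pi s.+1) x v L g_lip gamma_ge0 L_ge0 gammaL_le n_gt0).
have grad_dist : enorm (gavg g x - v) <= 2 * (gamma * L) * n%:R * enorm v'.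
  rewrite /x /v /nfg_x /nfg_v nfg_outerS.
  exact: (epoch_vtil_dist _ _ (pi s) _ _ L g_lip gamma_ge0 L_ge0 gammaL_le n_gt0).
have dist : enorm (gavg g x - M)
            <= 2 * (gamma * L * enorm v) + 2 * (gamma * L * n%:R * enorm v').
  have -> : gavg g x - M = (gavg g x - v) + - (M - v) by rewrite opprB addrA subrK.
  by apply: le_trans (enormD _ _) _; rewrite enormN; lra.
have := sqr_le_sqrD (enorm_ge0 _) dist.
have := sqr_ge0 (gamma * L * enorm v); have := sqr_ge0 (gamma * L * n%:R * enorm v').
rewrite !exprMn; lra.
Qed.
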